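(* Let $\varepsilon>0$ and let $(u_n)_{n=1}^\infty$ be a real sequence. Then $(u_n)_{n=1}^\infty$ is $\varepsilon$-approximately subadditive if and only if there exist real sequences $(v_n)_{n=1}^\infty$ and $(w_n)_{n=1}^\infty$ such that $(v_n)$ is subadditive, $0\le w_n\le\varepsilon$ for all $n\in\mathbb{N}$, and $u_n=v_n+w_n$ for all $n\in\mathbb{N}$ (in particular $v_n\le u_n$ for all $n$, i.e. $(v_n)$ is a subadditive minorant of $(u_n)$).
   Context: $\mathbb{N}=\{1,2,3,\dots\}$. For $n\in\mathbb{N}$, a partition of $n$ is a finite list $n_1,\dots,n_k\in\mathbb{N}$ ($k\ge1$) with $n_1+\cdots+n_k=n$. A sequence $(u_n)_{n=1}^\infty$ is called $\varepsilon$-approximately subadditive (for a fixed $\varepsilon>0$) if for every $n\in\mathbb{N}$ and every partition $n_1,\dots,n_k$ of $n$ one has $u_n\le u_{n_1}+\cdots+u_{n_k}+\varepsilon$. It is called subadditive if for every $n\in\mathbb{N}$ and every partition $n_1,\dots,n_k$ of $n$ one has $u_n\le u_{n_1}+\cdots+u_{n_k}$. *)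

From Stdlib Require Import Reals List.
Open Scope R_scope.

(* A real sequence (u_n)_{n>=1} is represented by u : nat -> R; only the
   values at positive indices matter. *)

Definition is_partition (n : nat) (p : list nat) : Prop :=
  p <> nil /\ Forall (fun k => (0 < k)%nat) p /\ fold_right Nat.add 0%nat p = n.

Definition sum_over (u : nat -> R) (p : list nat) : R :=
  fold_right (fun k s => u k + s) 0 p.

Definition approx_subadditive (eps : R) (u : nat -> R) : Prop :=
  forall (n : nat) (p : list nat), (0 < n)%nat -> is_partition n p ->
    u n <= sum_over u p + eps.

Definition subadditive (u : nat -> R) : Prop :=
  forall (n : nat) (p : list nat), (0 < n)%nat -> is_partition n p ->
    u n <= sum_over u p.

(* For ⇐, u_n = v_n + w_n ≤ Σ v_{n_i} + ε ≤ Σ u_{n_i} + ε.  For ⇒, take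
   v_n := min over all partitions of n of Σ u_{n_i}.  Then v ≤ u (use the
   trivial partition), u_n - ε ≤ v_n by approximate subadditivity applied to
   a minimising partition, and v is subadditive because refining each part
   n_i of a partition of n by a minimising partition of n_i yields a
   partition of n whose u-sum is Σ v_{n_i}. *)

From Stdlib Require Import Reals List Lra Lia.
Open Scope R_scope.

Lemma fold_Rmin_le_init (x : R) (l : list R) : fold_right Rmin x l <= x.
Proof.
  induction l as [|y l IH]; simpl; [lra|].
  pose proof (Rmin_r y (fold_right Rmin x l)); lra.
Qed.

Lemma fold_Rmin_le_In (x y : R) (l : list R) : In y l -> fold_right Rmin x l <= y.
Proof.
  induction l as [|z l IH]; simpl; [tauto|].
  intros [<- | Hy].
  - apply Rmin_l.
  - pose proof (Rmin_r z (fold_right Rmin x l)); specialize (IH Hy); lra.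
Qed.

Lemma fold_Rmin_cases (x : R) (l : list R) :
  fold_right Rmin x l = x \/ In (fold_right Rmin x l) l.
Proof.
  induction l as [|y l IH]; simpl; [now left|].
  destruct (Rle_dec y (fold_right Rmin x l)) as [Hle | Hgt].
  - rewrite Rmin_left by exact Hle; now right; left.
  - rewrite Rmin_right by lra.
    destruct IH as [IH | IH]; [now left | now right; right].
Qed.

Lemma sum_over_app (u : nat -> R) (p q : list nat) :
  sum_over u (p ++ q) = sum_over u p + sum_over u q.
Proof. induction p as [|k p IH]; simpl; [lra|]. rewrite IH; lra. Qed.

Lemma sum_over_le (u v : nat -> R) (p : list nat) :
  Forall (fun k => v k <= u k) p -> sum_over v p <= sum_over u p.
Proof. induction 1; simpl; lra. Qed.

Lemma is_partition_singleton (n : nat) : (0 < n)%nat -> is_partition n (n :: nil).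
Proof. intros Hn; repeat split; [discriminate | repeat constructor; lia | simpl; lia]. Qed.

Lemma is_partition_cons (a m : nat) (p : list nat) :
  (0 < a)%nat -> is_partition m p -> is_partition (a + m) (a :: p).
Proof. intros Ha (_ & Hpos & Hsum); repeat split; [discriminate | now constructor | simpl; lia]. Qed.

Lemma is_partition_cons_inv (n a : nat) (p : list nat) :
  p <> nil -> is_partition n (a :: p) -> (0 < a < n)%nat /\ is_partition (n - a) p.
Proof.
  intros Hp (_ & Hpos & Hsum); apply Forall_cons_iff in Hpos as [Ha Hpos].
  assert (0 < fold_right Nat.add 0 p)%nat.
  { destruct p as [|b p]; [congruence|]. apply Forall_cons_iff in Hpos as [Hb _]; simpl; lia. }
  simpl in Hsum; repeat split; auto; lia.
Qed.

Lemma is_partition_app (m n : nat) (p q : list nat) :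
  is_partition m p -> is_partition n q -> is_partition (m + n) (p ++ q).
Proof.
  intros (Hp & Hppos & Hpsum) (_ & Hqpos & Hqsum); repeat split.
  - destruct p; [congruence | discriminate].
  - now apply Forall_app.
  - change (list_sum (p ++ q) = m + n)%nat; rewrite list_sum_app; unfold list_sum; lia.
Qed.

Lemma is_partition_length (n : nat) (p : list nat) : is_partition n p -> (length p <= n)%nat.
Proof.
  intros (_ & Hpos & <-); induction Hpos as [|k p Hk _ IH]; simpl; lia.
Qed.

Section PartitionMinimum.

Variable u : nat -> R.

Definition is_partition_minimum (v : nat -> R) : Prop :=
  (forall n p, (0 < n)%nat -> is_partition n p -> v n <= sum_over u p) /\
  (forall n, (0 < n)%nat -> exists p, is_partition n p /\ v n = sum_over u p).

(* [min_sum f n] minimises [sum_over u] over the partitions of [n] into at most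
   [f + 1] parts, recursing on the first part. *)
Fixpoint min_sum (f n : nat) : R :=
  match f with
  | O => u n
  | S f => fold_right Rmin (u n) (map (fun a => u a + min_sum f (n - a)) (seq 1 (n - 1)))
  end.

Lemma min_sum_le_init (f n : nat) : min_sum f n <= u n.
Proof. destruct f; simpl; [lra | apply fold_Rmin_le_init]. Qed.

Lemma min_sum_le (f n : nat) (p : list nat) :
  is_partition n p -> (length p <= S f)%nat -> min_sum f n <= sum_over u p.
Proof.
  revert n p; induction f as [|f IH]; intros n p Hp Hlen;
    (destruct p as [|a [|b p]]; [destruct Hp; congruence | |]).
  1, 3: destruct Hp as (_ & _ & Hsum); simpl in Hsum; rewrite Nat.add_0_r in Hsum; subst n;
        apply (Rle_trans _ (u a)); [exact (min_sum_le_init _ _) | simpl; lra].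
  - simpl in Hlen; lia.
  - apply is_partition_cons_inv in Hp as [Ha Hp]; [|discriminate].
    simpl min_sum; change (sum_over u (a :: b :: p)) with (u a + sum_over u (b :: p)).
    eapply Rle_trans.
    + apply fold_Rmin_le_In, (in_map (fun c => u c + min_sum f (n - c)) _ a), in_seq; lia.
    + apply Rplus_le_compat_l, IH; [exact Hp | simpl in *; lia].
Qed.

Lemma min_sum_attained (f n : nat) :
  (0 < n)%nat -> exists p, is_partition n p /\ min_sum f n = sum_over u p.
Proof.
  revert n; induction f as [|f IH]; intros n Hn.
  - exists (n :: nil); split; [now apply is_partition_singleton | simpl; lra].
  - simpl; destruct (fold_Rmin_cases (u n) (map (fun a => u a + min_sum f (n - a)) (seq 1 (n - 1))))
      as [-> | Hin].
    + exists (n :: nil); split; [now apply is_partition_singleton | simpl; lra].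
    + apply in_map_iff in Hin as (a & <- & Ha); apply in_seq in Ha.
      destruct (IH (n - a)%nat) as (p & Hp & Hmin); [lia|].
      exists (a :: p); split.
      * replace n with (a + (n - a))%nat at 1 by lia; apply is_partition_cons; [lia | exact Hp].
      * simpl; lra.
Qed.

Lemma exists_partition_minimum : exists v, is_partition_minimum v.
Proof.
  exists (fun n => min_sum n n); split.
  - intros n p _ Hp; apply min_sum_le; [exact Hp|].
    apply is_partition_length in Hp; lia.
  - intros n Hn; apply min_sum_attained, Hn.
Qed.

Variable v : nat -> R.
Hypothesis v_min : is_partition_minimum v.

Lemma partition_minimum_le (n : nat) : (0 < n)%nat -> v n <= u n.
Proof.
  intros Hn; pose proof (proj1 v_min n _ Hn (is_partition_singleton n Hn)); simpl in *; lra.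
Qed.

Lemma partition_minimum_refine (p : list nat) :
  p <> nil -> Forall (fun k => (0 < k)%nat) p ->
  exists q, is_partition (list_sum p) q /\ sum_over u q = sum_over v p.
Proof.
  induction p as [|a p IH]; intros Hne Hpos; [congruence|].
  apply Forall_cons_iff in Hpos as [Ha Hpos].
  destruct (proj2 v_min a Ha) as (qa & Hqa & Hva).
  destruct p as [|b p].
  - exists qa; simpl; rewrite Nat.add_0_r; split; [exact Hqa | lra].
  - destruct (IH ltac:(discriminate) Hpos) as (q & Hq & Hsum).
    exists (qa ++ q); split.
    + now apply is_partition_app.
    + rewrite sum_over_app, Hsum; simpl; lra.
Qed.

Lemma partition_minimum_subadditive : subadditive v.
Proof.
  intros n p Hn (Hne & Hpos & Hsum).
  destruct (partition_minimum_refine p Hne Hpos) as (q & Hq & Hqsum).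
  fold (list_sum p) in Hsum; rewrite Hsum in Hq.
  rewrite <- Hqsum; exact (proj1 v_min n q Hn Hq).
Qed.

Lemma approx_subadditive_partition_minimum (eps : R) (n : nat) :
  approx_subadditive eps u -> (0 < n)%nat -> u n <= v n + eps.
Proof.
  intros Hu Hn; destruct (proj2 v_min n Hn) as (p & Hp & ->); exact (Hu n p Hn Hp).
Qed.

End PartitionMinimum.

Lemma subadditive_plus_bounded (eps : R) (u v w : nat -> R) :
  subadditive v -> (forall n, (0 < n)%nat -> 0 <= w n <= eps) ->
  (forall n, (0 < n)%nat -> u n = v n + w n) -> approx_subadditive eps u.
Proof.
  intros Hv Hw Huv n p Hn Hp.
  assert (sum_over v p <= sum_over u p).
  { apply sum_over_le; destruct Hp as (_ & Hpos & _).
    eapply Forall_impl; [|exact Hpos]; intros k Hk.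
    rewrite (Huv k Hk); pose proof (Hw k Hk); lra. }
  pose proof (Hv n p Hn Hp); rewrite (Huv n Hn); pose proof (Hw n Hn); lra.
Qed.

Theorem proposition2 (eps : R) (u : nat -> R) (heps : 0 < eps) :
  approx_subadditive eps u <->
  exists v w : nat -> R,
    subadditive v /\
    (forall n : nat, (0 < n)%nat -> 0 <= w n <= eps) /\
    (forall n : nat, (0 < n)%nat -> u n = v n + w n).
Proof.
  split.
  - intros Hu; destruct (exists_partition_minimum u) as (v & Hv).
    exists v, (fun n => u n - v n); split; [|split].
    + exact (partition_minimum_subadditive u v Hv).
    + intros n Hn.
      pose proof (partition_minimum_le u v Hv n Hn).
      pose proof (approx_subadditive_partition_minimum u v Hv eps n Hu Hn); lra.
    + intros n _; lra.
  - intros (v & w & Hv & Hw & Huv); exact (subadditive_plus_bounded eps u v w Hv Hw Huv).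
Qed.
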